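(* Define for real $y$ $$rt(y)=1-\int_0^{\pi/2}e^{-y^2\tan s}\,y^2\sec^2 s\,ds,\qquad H_1(y)=1+\int_0^{\pi/2}\left(\frac{y\sec^2 s\, e^{-y\tan s}}{\left(1+e^{-y\tan s}\right)^2}-\frac12 e^{-y^2\tan s}y^2\sec^2 s\right)ds$$ (improper Riemann integrals at $s=\pi/2$). For a positive integer $n$ define $$\sigma_0(n)=\sum_{i=1}^{\infty}rt\!\left(\sin\!\left(\pi\frac{n}{i}\right)\right),\qquad fes(n)=rt\bigl(\sigma_0(n)-2\bigr).$$ Then for every positive integer $n$, $\sigma_0(n)$ equals the number of positive divisors of $n$, and $fes(n)=1$ if $n$ is prime and $fes(n)=0$ otherwise. Moreover, for every real $x$, $$\sum_{i=1}^{\infty}fes(i)\,H_1(x-i)=\pi(x),$$ where $\pi(x)$ denotes the number of primes $p\le x$. *)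

From Stdlib Require Import Reals Lra ZArith Znumtheory List.
From Coquelicot Require Import Coquelicot.
Open Scope R_scope.

Definition rt (y : R) : R :=
  1 - RInt_gen (fun s => exp (- (y ^ 2 * tan s)) * y ^ 2 * (/ cos s) ^ 2)
                (at_point 0) (at_left (PI / 2)).

Definition H1 (y : R) : R :=
  1 + RInt_gen (fun s => y * (/ cos s) ^ 2 * exp (- (y * tan s))
                           / (1 + exp (- (y * tan s))) ^ 2
                         - / 2 * (exp (- (y ^ 2 * tan s)) * y ^ 2 * (/ cos s) ^ 2))
                (at_point 0) (at_left (PI / 2)).

(* term i (i >= 0) of sigma_0 corresponds to index i+1 >= 1 *)
Definition sigma0_term (n : nat) (i : nat) : R :=
  rt (sin (PI * (INR n / INR (i + 1)))).

Definition sigma0 (n : nat) : R := Series (sigma0_term n).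

Definition fes (n : nat) : R := rt (sigma0 n - 2).

Definition num_divisors (n : nat) : nat :=
  length (filter (fun d => Nat.eqb (n mod d) 0) (seq 1 n)).

Definition is_prime_nat (p : nat) : bool :=
  if prime_dec (Z.of_nat p) then true else false.

(* pi(x) = number of primes p <= x; every such p is < up x, so the range
   0 .. Z.to_nat (up x) - 1 suffices. *)
Definition prime_pi (x : R) : nat :=
  length (filter (fun p => andb (is_prime_nat p) (if Rle_dec (INR p) x then true else false))
                 (seq 0 (Z.to_nat (up x)))).

(* The substitution u = c tan s maps [0, pi/2) onto [0, c * oo), so the integral of
   c sec^2 s * g (c tan s) is G (c * oo) - G 0 for any primitive G of g.  With g u = e^-u and
   c = y^2 this is 1 for y <> 0 and 0 for y = 0: rt is the indicator of {0}.  With g the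
   derivative of the logistic function 1 / (1 + e^-u) and c = y it is logistic (y * oo) - 1/2,
   which makes H1 the Heaviside step 1_{y >= 0}.  Hence the i-th term of sigma0 n is 1 exactly
   when i divides n, fes n tests whether n has exactly two divisors, and the prime counting
   series has only finitely many nonzero terms fes i * 1_{i <= x}. *)

From Stdlib Require Import Reals Lra ZArith Znumtheory List Lia.
From Coquelicot Require Import Coquelicot.
Open Scope R_scope.

Lemma ex_derive_continuous_R (f : R -> R) (x : R) : ex_derive f x -> continuous f x.
Proof. exact (ex_derive_continuous (K := R_AbsRing) (V := R_NormedModule) f x). Qed.

Lemma is_RInt_gen_at_left_primitive (F f : R -> R) (a b L : R) :
  a < b ->
  (forall x, a <= x < b -> is_derive F x (f x)) ->
  (forall x, a <= x < b -> continuous f x) ->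
  filterlim F (at_left b) (locally L) ->
  is_RInt_gen f (at_point a) (at_left b) (L - F a).
Proof.
  intros Hab HF Hf HL P HP.
  assert (HLa : filterlim (fun x => minus (F x) (F a)) (at_left b) (locally (minus L (F a)))).
  { apply (filterlim_comp _ _ _ F (fun u => minus u (F a)) _ (locally L)); [exact HL|].
    apply (continuous_minus (fun u : R => u) (fun _ => F a)).
    - apply continuous_id.
    - apply continuous_const. }
  apply Filter_prod with (Q := fun x => x = a) (R := fun x => P (F x - F a) /\ a < x < b).
  - reflexivity.
  - apply filter_and; [apply HLa, HP|].
    exists (mkposreal _ (proj2 (Rlt_0_minus _ _) Hab)); intros x Hx Hxb; simpl in Hx.
    apply Rabs_lt_between' in Hx; lra.
  - intros a' x -> [HPx Hx]; exists (F x - F a); split; [|exact HPx].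
    apply (is_RInt_derive F f a x).
    + intros u Hu; apply HF; rewrite Rmin_left, Rmax_right in Hu; lra.
    + intros u Hu; apply Hf; rewrite Rmin_left, Rmax_right in Hu; lra.
Qed.

Lemma tan_at_left_PI2 : filterlim tan (at_left (PI / 2)) (Rbar_locally p_infty).
Proof.
  intros P [M HP]; pose proof PI_RGT_0; pose proof (atan_bound M).
  exists (mkposreal _ (proj2 (Rlt_0_minus _ _) (proj2 (atan_bound M)))); intros s Hs Hs'; simpl in Hs.
  apply HP; rewrite <- (tan_atan M); apply Rabs_lt_between' in Hs.
  apply tan_increasing; lra.
Qed.

Lemma is_derive_tan_sec (s : R) : cos s <> 0 -> is_derive tan s ((/ cos s) ^ 2).
Proof.
  intros Hc; replace ((/ cos s) ^ 2) with (tan s ^ 2 + 1); [exact (is_derive_tan s Hc)|].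
  pose proof (sin2_cos2 s) as Hs; unfold Rsqr in Hs; unfold tan; field_simplify_eq; [lra|exact Hc].
Qed.

(* For [c = 0] Coquelicot's [Rbar_mult 0 p_infty] is [0], the limit of the constant [0]. *)
Lemma filterlim_scal_tan_at_left_PI2 (c : R) :
  filterlim (fun s => c * tan s) (at_left (PI / 2)) (Rbar_locally (Rbar_mult c p_infty)).
Proof.
  apply (filterlim_comp _ _ _ tan (fun t => c * t) _ (Rbar_locally p_infty));
    [exact tan_at_left_PI2|].
  exact (is_lim_scal_l _ c _ _ (is_lim_id p_infty)).
Qed.

Lemma is_RInt_gen_tan_subst (f G g : R -> R) (c L : R) :
  (forall s, f s = c * (/ cos s) ^ 2 * g (c * tan s)) ->
  (forall t, is_derive G t (g t)) ->
  (forall t, continuous g t) ->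
  filterlim G (Rbar_locally (Rbar_mult c p_infty)) (locally L) ->
  is_RInt_gen f (at_point 0) (at_left (PI / 2)) (L - G 0).
Proof.
  intros Hf HG Hg HL.
  assert (Hcos : forall s, 0 <= s < PI / 2 -> cos s <> 0).
  { intros s Hs; pose proof PI_RGT_0; apply Rgt_not_eq, cos_gt_0; lra. }
  replace (G 0) with (G (c * tan 0)) by now rewrite tan_0, Rmult_0_r.
  apply (is_RInt_gen_at_left_primitive (fun s => G (c * tan s))).
  - pose proof PI_RGT_0; lra.
  - intros s Hs; rewrite Hf.
    apply (is_derive_comp G (fun s => c * tan s)); [apply HG|].
    apply is_derive_scal, is_derive_tan_sec, Hcos, Hs.
  - intros s Hs; apply (continuous_ext (fun s => mult (c * (/ cos s) ^ 2) (g (c * tan s))));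
      [intros; symmetry; apply Hf|].
    apply (continuous_mult (K := R_AbsRing) (fun s => c * (/ cos s) ^ 2) (fun s => g (c * tan s))).
    + apply ex_derive_continuous_R; auto_derive; apply Hcos, Hs.
    + apply continuous_comp; [|apply Hg].
      apply ex_derive_continuous_R; exists (c * (/ cos s) ^ 2); apply is_derive_scal, is_derive_tan_sec, Hcos, Hs.
  - exact (filterlim_comp _ _ _ _ G _ _ _ (filterlim_scal_tan_at_left_PI2 c) HL).
Qed.

Lemma Rbar_mult_pos_p_infty (c : R) : 0 < c -> Rbar_mult c p_infty = p_infty.
Proof.
  intros Hc; unfold Rbar_mult, Rbar_mult'; destruct (Rle_dec 0 c) as [H|H]; [|exfalso; lra].
  destruct (Rle_lt_or_eq_dec 0 c H); [reflexivity|exfalso; lra].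
Qed.

Lemma Rbar_mult_neg_p_infty (c : R) : c < 0 -> Rbar_mult c p_infty = m_infty.
Proof. intros Hc; unfold Rbar_mult, Rbar_mult'; destruct (Rle_dec 0 c); [exfalso; lra|reflexivity]. Qed.

Lemma filterlim_exp_opp_p_infty :
  filterlim (fun t => exp (- t)) (Rbar_locally p_infty) (locally 0).
Proof.
  apply (filterlim_comp _ _ _ Ropp exp _ (Rbar_locally m_infty)).
  - exact (is_lim_opp _ _ _ (is_lim_id p_infty)).
  - exact is_lim_exp_m.
Qed.

Definition rt_integrand (y s : R) : R := exp (- (y ^ 2 * tan s)) * y ^ 2 * (/ cos s) ^ 2.

Lemma is_RInt_gen_rt_integrand (y : R) :
  is_RInt_gen (rt_integrand y) (at_point 0) (at_left (PI / 2))
    (if Req_EM_T y 0 then 0 else 1).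
Proof.
  set (G t := - exp (- t)).
  assert (HG0 : G 0 = -1) by (unfold G; rewrite Ropp_0, exp_0; reflexivity).
  assert (Hsubst : forall L, filterlim G (Rbar_locally (Rbar_mult (y ^ 2) p_infty)) (locally L) ->
            is_RInt_gen (rt_integrand y) (at_point 0) (at_left (PI / 2)) (L - G 0)).
  { intros L; apply is_RInt_gen_tan_subst with (g := fun t => exp (- t)).
    - intros s; unfold rt_integrand; ring.
    - intros t; unfold G; auto_derive; [exact I|ring].
    - intros t; apply ex_derive_continuous_R; auto_derive; exact I. }
  destruct (Req_EM_T y 0) as [->|Hy].
  - enough (H : is_RInt_gen (rt_integrand 0) (at_point 0) (at_left (PI / 2)) (G 0 - G 0))
      by (rewrite Rminus_diag in H; exact H).
    apply Hsubst; replace (0 ^ 2) with 0 by ring; rewrite Rbar_mult_0_l.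
    apply ex_derive_continuous_R; unfold G; auto_derive; exact I.
  - replace 1 with (0 - G 0) by (rewrite HG0; ring).
    apply Hsubst; rewrite Rbar_mult_pos_p_infty by (apply pow2_gt_0, Hy).
    replace (locally 0) with (Rbar_locally (Rbar_opp 0)) by (simpl; now rewrite Ropp_0).
    exact (is_lim_opp (fun t => exp (- t)) p_infty 0 filterlim_exp_opp_p_infty).
Qed.

Lemma rt_eq (y : R) : rt y = if Req_EM_T y 0 then 1 else 0.
Proof.
  unfold rt; fold (rt_integrand y); rewrite (is_RInt_gen_unique _ _ (is_RInt_gen_rt_integrand y)).
  destruct (Req_EM_T y 0); ring.
Qed.

Definition logistic (t : R) : R := / (1 + exp (- t)).

Lemma logistic_0 : logistic 0 = / 2.
Proof. unfold logistic; rewrite Ropp_0, exp_0; field. Qed.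

Lemma is_derive_logistic (t : R) : is_derive logistic t (exp (- t) / (1 + exp (- t)) ^ 2).
Proof.
  pose proof (exp_pos (- t)); unfold logistic; auto_derive; [lra|field; lra].
Qed.

Lemma filterlim_logistic_p_infty : filterlim logistic (Rbar_locally p_infty) (locally 1).
Proof.
  replace 1 with (/ (1 + 0)) by field.
  apply (filterlim_comp _ _ _ (fun t => exp (- t)) (fun u => / (1 + u)) _ (locally 0));
    [exact filterlim_exp_opp_p_infty|].
  apply (ex_derive_continuous_R (fun u => / (1 + u))); auto_derive; lra.
Qed.

Lemma filterlim_logistic_m_infty : filterlim logistic (Rbar_locally m_infty) (locally 0).
Proof.
  apply (filterlim_ext (fun t => exp t / (exp t + 1))).
  { intros t; unfold logistic; rewrite exp_Ropp; pose proof (exp_pos t); field; lra. }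
  assert (Hg : continuous (fun u => u / (u + 1)) 0)
    by (apply ex_derive_continuous_R; auto_derive; lra).
  unfold continuous in Hg; replace (0 / (0 + 1)) with 0 in Hg by field.
  exact (filterlim_comp _ _ _ exp _ _ _ _ is_lim_exp_m Hg).
Qed.

Definition logistic_integrand (y s : R) : R :=
  y * (/ cos s) ^ 2 * exp (- (y * tan s)) / (1 + exp (- (y * tan s))) ^ 2.

Lemma is_RInt_gen_logistic_integrand (y L : R) :
  filterlim logistic (Rbar_locally (Rbar_mult y p_infty)) (locally L) ->
  is_RInt_gen (logistic_integrand y) (at_point 0) (at_left (PI / 2)) (L - / 2).
Proof.
  rewrite <- logistic_0; apply is_RInt_gen_tan_subst with (g := fun t => exp (- t) / (1 + exp (- t)) ^ 2).
  - intros s; unfold logistic_integrand, Rdiv; ring.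
  - exact is_derive_logistic.
  - intros t; apply ex_derive_continuous_R; auto_derive.
    pose proof (exp_pos (- t)); apply Rmult_integral_contrapositive; split; lra.
Qed.

Lemma H1_of_integrals (y I1 I2 : R) :
  is_RInt_gen (logistic_integrand y) (at_point 0) (at_left (PI / 2)) I1 ->
  is_RInt_gen (rt_integrand y) (at_point 0) (at_left (PI / 2)) I2 ->
  H1 y = 1 + (I1 - / 2 * I2).
Proof.
  intros HI1 HI2; unfold H1; f_equal.
  exact (is_RInt_gen_unique _ _ (is_RInt_gen_minus _ _ _ _ HI1 (is_RInt_gen_scal _ (/ 2) _ HI2))).
Qed.

Lemma H1_eq (y : R) : H1 y = if Rle_dec 0 y then 1 else 0.
Proof.
  pose proof (is_RInt_gen_rt_integrand y) as Hrt.
  destruct (Rle_dec 0 y) as [Hy|Hy]; destruct (Req_EM_T y 0) as [Hy0|Hy0].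
  - subst y; rewrite (H1_of_integrals 0 (/ 2 - / 2) 0); [ring| |exact Hrt].
    apply is_RInt_gen_logistic_integrand; rewrite Rbar_mult_0_l, <- logistic_0.
    apply ex_derive_continuous_R; eexists; apply is_derive_logistic.
  - rewrite (H1_of_integrals y (1 - / 2) 1); [field| |exact Hrt].
    apply is_RInt_gen_logistic_integrand; rewrite Rbar_mult_pos_p_infty by lra.
    exact filterlim_logistic_p_infty.
  - lra.
  - rewrite (H1_of_integrals y (0 - / 2) 1); [field| |exact Hrt].
    apply is_RInt_gen_logistic_integrand; rewrite Rbar_mult_neg_p_infty by lra.
    exact filterlim_logistic_m_infty.
Qed.

Lemma filter_nil_iff {A} (f : A -> bool) (l : list A) :
  filter f l = nil <-> (forall x, In x l -> f x = false).
Proof.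
  split.
  - intros Hnil x Hx; destruct (f x) eqn:Hfx; [|reflexivity].
    assert (Hin : In x (filter f l)) by (apply filter_In; split; assumption).
    rewrite Hnil in Hin; destruct Hin.
  - intros Hf; rewrite (filter_ext_in f (fun _ => false)) by exact Hf; apply filter_false.
Qed.

Lemma sum_n_indicator (p : nat -> bool) (m : nat) :
  p 0%nat = false ->
  sum_n (fun i => if p (S i) then 1 else 0) m = INR (length (filter p (seq 0 (S (S m))))).
Proof.
  intros Hp0; induction m as [|m IH].
  - rewrite sum_O; simpl; rewrite Hp0; destruct (p 1%nat); reflexivity.
  - rewrite sum_Sn, IH, (seq_S (S (S m))), filter_app, length_app, plus_INR.
    unfold plus; simpl; destruct (p (S (S m))); simpl; ring.
Qed.

Lemma is_series_indicator (p : nat -> bool) (K : nat) :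
  p 0%nat = false -> (forall j, (K <= j)%nat -> p j = false) ->
  is_series (fun i => if p (S i) then 1 else 0) (INR (length (filter p (seq 0 K)))).
Proof.
  intros Hp0 HpK P HP; exists K; intros m Hm; rewrite sum_n_indicator by exact Hp0.
  replace (S (S m)) with (K + (S (S m) - K))%nat by lia.
  rewrite seq_app, filter_app, (proj2 (filter_nil_iff p (seq (0 + K) _))), app_nil_r.
  - exact (locally_singleton _ _ HP).
  - intros j Hj; apply in_seq in Hj; apply HpK; lia.
Qed.

Lemma mod_eq_0_divide (n d : nat) :
  (0 < d)%nat -> (n mod d = 0)%nat <-> (Z.of_nat d | Z.of_nat n)%Z.
Proof. intros Hd; rewrite <- Z.mod_divide, <- Nat2Z.inj_mod by lia; lia. Qed.

Lemma sin_PI_div_eq_0 (n m : nat) :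
  (0 < m)%nat -> sin (PI * (INR n / INR m)) = 0 <-> (n mod m = 0)%nat.
Proof.
  intros Hm; assert (Hm' : INR m <> 0) by (apply not_0_INR; lia).
  split.
  - intros Hsin; apply sin_eq_0_0 in Hsin as [k Hk].
    assert (Hnk : INR n = IZR k * INR m).
    { pose proof PI_RGT_0.
      apply (Rmult_eq_compat_r (INR m / PI)) in Hk; field_simplify in Hk; lra. }
    rewrite !INR_IZR_INZ, <- mult_IZR in Hnk; apply eq_IZR in Hnk.
    apply mod_eq_0_divide; [exact Hm|]; exists k; exact Hnk.
  - intros Hmod; apply Nat.Div0.div_exact in Hmod.
    apply sin_eq_0_1; exists (Z.of_nat (n / m)); rewrite <- INR_IZR_INZ.
    rewrite Hmod at 1; rewrite mult_INR; field; exact Hm'.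
Qed.

Lemma sigma0_term_eq (n i : nat) : sigma0_term n i = if Nat.eqb (n mod S i) 0 then 1 else 0.
Proof.
  unfold sigma0_term; rewrite Nat.add_1_r, rt_eq.
  pose proof (sin_PI_div_eq_0 n (S i) (Nat.lt_0_succ i)) as Hiff.
  destruct (Req_EM_T _ 0); destruct (Nat.eqb_spec (n mod S i) 0); tauto || reflexivity.
Qed.

Lemma is_series_sigma0_term (n : nat) :
  (1 <= n)%nat -> is_series (sigma0_term n) (INR (num_divisors n)).
Proof.
  intros Hn; destruct n as [|n]; [lia|].
  assert (Hdiv : num_divisors (S n) =
                 length (filter (fun d => Nat.eqb (S n mod d) 0) (seq 0 (S (S n))))) by reflexivity.
  rewrite Hdiv; apply (is_series_ext _ _ _ (fun i => eq_sym (sigma0_term_eq (S n) i))).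
  apply is_series_indicator; [reflexivity|].
  intros j Hj; rewrite Nat.mod_small by lia; apply Nat.eqb_neq; lia.
Qed.

Lemma num_divisors_eq_2 (n : nat) : (1 <= n)%nat -> num_divisors n = 2%nat <-> prime (Z.of_nat n).
Proof.
  intros Hn; destruct n as [|[|k]]; [lia| |].
  - split; [discriminate|]; intros Hp; destruct (not_prime_1 Hp).
  - unfold num_divisors; rewrite <- prime_alt; unfold prime'.
    change (seq 1 (S (S k))) with (1%nat :: seq 2 (S k)).
    rewrite (seq_S k 2); cbn [filter]; rewrite filter_app; cbn [filter].
    replace (2 + k)%nat with (S (S k)) by lia; rewrite Nat.Div0.mod_same, Nat.mod_1_r.
    cbn [Nat.eqb length]; rewrite length_app; cbn [length].
    rewrite Nat.add_1_r; split.
    + intros Hlen; injection Hlen as Hlen; apply length_zero_iff_nil in Hlen; rewrite filter_nil_iff in Hlen.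
      split; [lia|]; intros z Hz Hdz.
      rewrite <- (Z2Nat.id z) in Hdz by lia; apply mod_eq_0_divide in Hdz; [|lia].
      assert (Hin : In (Z.to_nat z) (seq 2 k)) by (apply in_seq; lia).
      specialize (Hlen _ Hin); rewrite Hdz in Hlen; discriminate.
    + intros [_ Hrel]; rewrite (proj2 (filter_nil_iff _ _)); [reflexivity|].
      intros d Hd; apply in_seq in Hd; apply Nat.eqb_neq; intros Hdd.
      apply mod_eq_0_divide in Hdd; [|lia]; apply (Hrel (Z.of_nat d)); [lia|exact Hdd].
Qed.

Lemma sigma0_eq (n : nat) : (1 <= n)%nat -> sigma0 n = INR (num_divisors n).
Proof. intros Hn; apply is_series_unique, is_series_sigma0_term, Hn. Qed.

Lemma fes_eq (n : nat) : (1 <= n)%nat -> fes n = if is_prime_nat n then 1 else 0.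
Proof.
  intros Hn; unfold fes, is_prime_nat; rewrite sigma0_eq, rt_eq by exact Hn.
  pose proof (num_divisors_eq_2 n Hn) as Hiff.
  destruct (Req_EM_T _ 0) as [H2|H2]; destruct (prime_dec (Z.of_nat n)) as [Hp|Hp];
    try reflexivity; exfalso.
  - apply Hp, Hiff, INR_eq; simpl; lra.
  - apply H2; rewrite (proj2 Hiff Hp); simpl; ring.
Qed.

Lemma is_prime_nat_0 : is_prime_nat 0 = false.
Proof.
  unfold is_prime_nat; destruct (prime_dec (Z.of_nat 0)) as [[Hp _]|_]; [simpl in Hp; lia|reflexivity].
Qed.

Lemma lt_INR_up (x : R) (j : nat) : (Z.to_nat (up x) <= j)%nat -> x < INR j.
Proof.
  intros Hj; destruct (archimed x) as [Hup _]; apply le_INR in Hj; rewrite INR_IZR_INZ in Hj.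
  destruct (Z_le_gt_dec 0 (up x)) as [Hpos|Hneg].
  - rewrite Z2Nat.id in Hj by exact Hpos; lra.
  - apply Z.gt_lt, IZR_lt in Hneg; pose proof (pos_INR j); lra.
Qed.

Theorem mainTheorem8 :
  (forall n : nat, (1 <= n)%nat ->
     is_series (sigma0_term n) (INR (num_divisors n)) /\
     sigma0 n = INR (num_divisors n) /\
     fes n = (if is_prime_nat n then 1 else 0)) /\
  (forall x : R,
     is_series (fun i : nat => fes (i + 1) * H1 (x - INR (i + 1))) (INR (prime_pi x))).
Proof.
  split.
  - intros n Hn; split; [|split]; [apply is_series_sigma0_term|apply sigma0_eq|apply fes_eq]; exact Hn.
  - intros x; unfold prime_pi; eapply is_series_ext; [|apply is_series_indicator].
    + intros i; rewrite Nat.add_1_r, fes_eq, H1_eq by lia.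
      destruct (is_prime_nat (S i)); cbn [andb];
        destruct (Rle_dec 0 (x - INR (S i))); destruct (Rle_dec (INR (S i)) x); lra.
    + rewrite is_prime_nat_0; reflexivity.
    + intros j Hj; apply lt_INR_up in Hj.
      destruct (Rle_dec (INR j) x); [lra|apply Bool.andb_false_r].
Qed.
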